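(* Let $r\ge3$ be an integer and let $G$ be an $(r+1)$-path degenerate graph with maximum degree $\Delta\ge3$. If $G$ is a forest, then $a'_r(G)=\Delta$; otherwise $a'_r(G)=\max\{\Delta,r\}$.
   Context: Graphs are finite and simple. For an integer $r\ge3$, the generalized $r$-acyclic chromatic index $a'_r(G)$ is the minimum number of colors in a proper edge coloring of $G$ (adjacent edges get distinct colors) such that every cycle $C$ of $G$ receives at least $\min\{|C|,r\}$ distinct colors. A strict ear of a graph $G$ is a path of $G$ whose internal vertices all have degree $2$ in $G$ and whose two endpoints are distinct. For an integer $p\ge1$, a $p$-reduction of $G$ is the deletion of either an isolated vertex, or a vertex of degree $1$, or the internal vertices of a strict ear of $G$ of length at least $p$. A graph is $p$-path degenerate if it can be reduced to the empty graph by a sequence of $p$-reductions. *)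

From mathcomp Require Import all_boot.
Set Implicit Arguments. Unset Strict Implicit. Unset Printing Implicit Defensive.

(* A finite simple graph is given by a vertex finType T and an adjacency
   relation e : rel T, assumed symmetric and irreflexive. *)

Section Graph.
Variables (T : finType) (e : rel T).

Definition deg_in (S : {set T}) (v : T) : nat := #|[set u in S | e v u]|.

Definition max_deg : nat := \max_(v : T) #|[set u | e v u]|.

Definition is_graph_cycle (s : seq T) : Prop :=
  [/\ 3 <= size s, uniq s & cycle e s].

Definition is_forest : Prop := forall s, ~ is_graph_cycle s.

Definition cycle_colors (col : T -> T -> nat) (s : seq T) : nat :=
  size (undup [seq col x (next s x) | x <- s]).

Definition r_acyclic_coloring (r k : nat) (col : T -> T -> nat) : Prop :=
  [/\ (forall x y, e x y -> col x y = col y x),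
      (forall x y, e x y -> col x y < k),
      (forall x y z, e x y -> e x z -> y != z -> col x y != col x z) &
      (forall s, is_graph_cycle s -> minn (size s) r <= cycle_colors col s)].

Definition r_acyclic_colorable (r k : nat) : Prop :=
  exists col, r_acyclic_coloring r k col.

Definition gen_acyclic_index (r k : nat) : Prop :=
  r_acyclic_colorable r k /\ (forall k', r_acyclic_colorable r k' -> k <= k').

Definition p_reduction (p : nat) (S S' : {set T}) : Prop :=
  (exists v, v \in S /\ deg_in S v = 0 /\ S' = S :\ v)
  \/ (exists v, v \in S /\ deg_in S v = 1 /\ S' = S :\ v)
  \/ (exists (x y : T) (s : seq T),
        all (fun z => z \in S) (x :: rcons s y) /\
        uniq (x :: rcons s y) /\
        path e x (rcons s y) /\
        x != y /\
        all (fun z => deg_in S z == 2) s /\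
        p <= (size s).+1 /\
        S' = S :\: [set z in s]).

Inductive p_degenerate (p : nat) : {set T} -> Prop :=
  | pdeg_empty : p_degenerate p set0
  | pdeg_step S S' : p_reduction p S S' -> p_degenerate p S' -> p_degenerate p S.

Definition path_degenerate (p : nat) : Prop := p_degenerate p [set: T].

End Graph.

(* A proper edge colouring needs Delta colours.  If G has a cycle, look
   at the reduction that first destroys a cycle C: it cannot remove a vertex of degree
   at most 1, so it removes the interior of an ear of length at least r+1, and since the
   interior vertices have degree 2, C contains the whole ear.  Hence G has a cycle of
   length at least r, which needs r colours.

   Undo the reductions one at a time, keeping a proper colouring with
   K = max(Delta, r) colours (K = Delta and R = 3 for a forest) in which every cycle C
   gets at least min(|C|, R) colours.  An isolated vertex needs nothing, a pendant edge
   takes a colour missing at its neighbour.  An ear has at least R interior vertices;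
   colour its edges by a sequence that avoids the colours already present at its two
   ends, changes at every step and takes R distinct values.  Every new cycle passes
   through the ear, hence contains all of it and sees these R colours. *)

From mathcomp Require Import all_boot zify.
Set Implicit Arguments. Unset Strict Implicit. Unset Printing Implicit Defensive.

Lemma size_undup_subset (T : eqType) (s1 s2 : seq T) :
  {subset s1 <= s2} -> size (undup s1) <= size (undup s2).
Proof.
by move=> s12; apply: uniq_leq_size (undup_uniq _) _ => z; rewrite !mem_undup => /s12.
Qed.

Section EarColoring.
Variables (K R m a b : nat).
Hypotheses (R3 : 3 <= R) (RK : R <= K) (Rm : R <= m) (aK : a < K) (bK : b < K).

Definition ear_palette : seq nat := a :: rem a (b :: rem b (iota 0 K)).

Lemma ear_palette_uniq : uniq ear_palette.
Proof.
have ub : uniq (b :: rem b (iota 0 K)) by rewrite cons_uniq mem_rem_uniqF ?rem_uniq ?iota_uniq.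
by rewrite /ear_palette cons_uniq mem_rem_uniqF ?rem_uniq.
Qed.

Lemma size_ear_palette : size ear_palette = K.
Proof.
have bK' : b \in iota 0 K by rewrite mem_iota.
have aK' : a \in b :: rem b (iota 0 K).
  by rewrite inE mem_rem_uniq ?iota_uniq // !inE mem_iota aK andbT; case: eqP.
have -> : size ear_palette = (size (rem a (b :: rem b (iota 0 K)))).+1 by [].
by rewrite size_rem //= size_rem // size_iota prednK //; lia.
Qed.

Lemma ear_palette_lt i : nth 0 ear_palette i < K.
Proof.
have [iK|] := ltnP i (size ear_palette); last by move/(nth_default 0)->; lia.
have : nth 0 ear_palette i \in ear_palette by exact: mem_nth.
move: (nth _ _ _) => z; rewrite /ear_palette inE => /predU1P[->//|/mem_rem].
by rewrite inE => /predU1P[->//|/mem_rem]; rewrite mem_iota.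
Qed.

Lemma nth_ear_palette_end : nth 0 ear_palette (a != b) = b.
Proof. by rewrite /ear_palette; case: eqP => [->|/eqP ab] //=; rewrite eq_sym (negbTE ab). Qed.

(* Position 0 gets palette colour 0, positions 1 .. R-2 get colours 2 .. R-1, and the
   remaining positions alternate between colours 0 and 1 so as to end with colour q. *)
Definition ear_pattern (q : bool) (j : nat) : nat :=
  if j == 0 then 0 else if j <= R.-2 then j.+1 else odd (m - j) (+) q.

Lemma ear_pattern_lt q j : ear_pattern q j < R.
Proof. by rewrite /ear_pattern; case: ifP => _; [|case: ifP => ?; [|case: (_ (+) _)]]; lia. Qed.

Lemma ear_pattern_end q : ear_pattern q m = q.
Proof. by rewrite /ear_pattern subnn; repeat case: ifP => ?; lia. Qed.

Lemma ear_pattern_step q j : j < m -> ear_pattern q j != ear_pattern q j.+1.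
Proof.
move=> jm; rewrite /ear_pattern -(subnSK jm) /=.
by case: (odd _); case: q; repeat case: ifP => ?; lia.
Qed.

Lemma ear_pattern_onto q i : i < R -> exists2 j, j <= m & ear_pattern q j = i.
Proof.
move=> iR; rewrite /ear_pattern.
case: (posnP i) => [->|i0]; first by exists 0.
case: (eqVneq i 1) => [->|i1]; last by exists i.-1; [|repeat case: ifP => ?]; lia.
exists (m - ~~ q); first lia.
by case: q => /=; rewrite ?subn0 ?subKn //; repeat case: ifP => ?; lia.
Qed.

Lemma ear_coloring : exists c : nat -> nat,
  [/\ c 0 = a, c m = b, (forall j, j < m -> c j != c j.+1), (forall j, c j < K) &
      R <= size (undup [seq c j | j <- iota 0 m.+1])].
Proof.
pose q := a != b; exists (fun j => nth 0 ear_palette (ear_pattern q j)); split.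
- by [].
- by rewrite ear_pattern_end nth_ear_palette_end.
- move=> j jm; have ltK k : ear_pattern q k < size ear_palette.
    by rewrite size_ear_palette (leq_trans (ear_pattern_lt _ _)).
  by rewrite nth_uniq ?ear_palette_uniq ?ear_pattern_step.
- by move=> j; exact: ear_palette_lt.
have -> : R = size [seq nth 0 ear_palette i | i <- iota 0 R] by rewrite size_map size_iota.
apply: uniq_leq_size.
  rewrite map_inj_in_uniq ?iota_uniq // => i j; rewrite !mem_iota !add0n => /andP[_ iR] /andP[_ jR].
  move/eqP; rewrite nth_uniq ?ear_palette_uniq ?size_ear_palette //.
  - exact/eqP.
  - exact: leq_trans iR RK.
  - exact: leq_trans jR RK.
move=> z /mapP[i]; rewrite mem_iota add0n => /andP[_ /(ear_pattern_onto q)[j jm <-]] ->.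
by rewrite mem_undup; apply/mapP; exists j; rewrite // mem_iota add0n ltnS.
Qed.

End EarColoring.

Lemma minn_step_neq (c : nat -> nat) m i j1 j2 : (forall j, j < m -> c j != c j.+1) ->
  0 < i <= m -> j1.+1 = i \/ j1 = i.+1 -> j2.+1 = i \/ j2 = i.+1 -> j1 != j2 ->
  c (minn i j1) != c (minn i j2).
Proof.
move=> c_step /andP[i0 im] h1 h2 j12.
have ci : c i.-1 != c i by rewrite -{2}(prednK i0) c_step // -ltnS prednK.
have minE j : j.+1 = i \/ j = i.+1 -> minn i j = if j < i then i.-1 else i by case: ifP; lia.
by rewrite (minE _ h1) (minE _ h2); case: ifP => ?; case: ifP => ? //; rewrite 1?eq_sym //; lia.
Qed.

(* If prev u = next u = v then u = next v, which is the vertex after v. *)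
Lemma next_neq_prev (T : eqType) (c : seq T) u :
  uniq c -> 3 <= size c -> u \in c -> next c u != prev c u.
Proof.
move=> uc sc /rot_to[i t rot_c].
rewrite -(next_rot i uc) -(prev_rot i uc) rot_c.
have := sc; rewrite -(size_rot i) rot_c; have := uc; rewrite -(rot_uniq i) rot_c.
case: t {rot_c} => [|v [|w t]] // ut _; apply/eqP => E.
have := next_prev ut u; rewrite -E /= eqxx.
move: ut; rewrite /= !inE => /and3P[/norP[uv /norP[uw _]] /norP[vw _] _].
by rewrite eq_sym (negbTE uv) eqxx => wu; rewrite wu eqxx in uw.
Qed.

Lemma path_const_in (T : eqType) (rT : eqType) (r : rel T) (f : T -> rT) h t :
  {in h :: t &, forall u w, r u w -> f u = f w} -> path r h t ->
  {in h :: t, forall z, f z = f h}.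
Proof.
elim: t h => [|k t IH] h fr /=; first by move=> _ z /[!inE] /eqP->.
case/andP=> hk pk z /[!inE] /predU1P[->//|zt].
have frk : {in k :: t &, forall u w, r u w -> f u = f w}.
  by move=> u w ut wt; apply: fr; rewrite inE ?ut ?wt orbT.
by rewrite (IH k frk pk z) ?inE ?zt ?orbT // (fr h k) // !inE eqxx ?orbT.
Qed.

Section Graph.
Variables (T : finType) (e : rel T).
Hypothesis esym : symmetric e.

Lemma deg_in_le_max_deg (S : {set T}) v : deg_in e S v <= max_deg e.
Proof.
apply: leq_trans (leq_bigmax v); apply: subset_leq_card.
by apply/subsetP=> w; rewrite !inE => /andP[].
Qed.

Lemma cycle_nbrs (S : {set T}) c u : is_graph_cycle e c -> {subset c <= S} ->
  u \in c -> [/\ next c u \in [set w in S | e u w], prev c u \in [set w in S | e u w]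
  & next c u != prev c u].
Proof.
case=> sc uc cc cS uin; split; last exact: next_neq_prev.
  by rewrite inE cS ?mem_next // next_cycle.
by rewrite inE cS ?mem_prev // esym prev_cycle.
Qed.

Lemma deg_in_cycle (S : {set T}) c u : is_graph_cycle e c -> {subset c <= S} ->
  u \in c -> 1 < deg_in e S u.
Proof.
move=> cyc cS uc; have [nN pN np] := cycle_nbrs cyc cS uc.
apply: leq_trans (_ : #|[set next c u; prev c u]| <= _); first by rewrite cards2 np.
by apply/subset_leq_card/subsetP=> z /set2P[]->.
Qed.

Lemma deg2_nbr (S : {set T}) u a b w : deg_in e S u = 2 -> a \in S -> b \in S ->
  e u a -> e u b -> a != b -> w \in S -> e u w -> w = a \/ w = b.
Proof.
move=> du aS bS ua ub ab wS uw.
have /eqP Nu : [set a; b] == [set z in S | e u z].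
  rewrite eqEcard cards2 ab -du leqnn andbT.
  by apply/subsetP=> z /set2P[]->; rewrite inE ?aS ?bS.
by apply/set2P; rewrite Nu inE wS.
Qed.

Lemma deg2_cycle_edge (S : {set T}) c u w : is_graph_cycle e c -> {subset c <= S} ->
  u \in c -> deg_in e S u = 2 -> w \in S -> e u w ->
  w = next c u \/ (w \in c /\ u = next c w).
Proof.
move=> cyc cS uc du wS uw.
have [] := cycle_nbrs cyc cS uc; rewrite !inE => /andP[nS nu] /andP[pS pu] np.
case: (deg2_nbr du nS pS nu pu np wS uw) => ->; first by left.
by right; rewrite mem_prev next_prev //; case: cyc.
Qed.

Lemma ear_sub_cycle (S : {set T}) x y s c : path e x (rcons s y) ->
  {in s, forall z, deg_in e S z = 2} -> {subset s <= S} ->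
  is_graph_cycle e c -> {subset c <= S} -> has (mem c) s -> {subset s <= c}.
Proof.
case: s => [//|h t] pth s2 sS cyc cS /hasP[z zs zc].
move: pth => /= /andP[_]; rewrite rcons_path => /andP[pht _].
have same : {in h :: t &, forall u w, e u w -> (u \in c) = (w \in c)}.
  move=> u w us ws uw; apply/idP/idP => [uc|wc].
    by case: (deg2_cycle_edge cyc cS uc (s2 u us) (sS w ws) uw) => [->|[]//]; rewrite mem_next.
  rewrite esym in uw.
  by case: (deg2_cycle_edge cyc cS wc (s2 w ws) (sS u us) uw) => [->|[]//]; rewrite mem_next.
have cst := path_const_in same pht.
by move=> q qs; rewrite (cst q qs) -(cst z zs).
Qed.

Lemma deg_in_subset_lt (S S' : {set T}) z u : S' \subset S -> u \in S -> u \notin S' ->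
  e z u -> deg_in e S' z < deg_in e S z.
Proof.
move=> sS uS uS' zu; apply: proper_card; apply/properP; split.
  by apply/subsetP=> w /[!inE] /andP[/(subsetP sS) -> ->].
by exists u; rewrite !inE ?uS ?zu // (negbTE uS').
Qed.

Lemma free_color (S : {set T}) (col : T -> T -> nat) u k : deg_in e S u < k ->
  exists2 a, a < k & {in S, forall w, e u w -> col u w != a}.
Proof.
pose L := [seq col u w | w <- enum [set w in S | e u w]].
move=> dk; have /hasP[a] : has (fun a => a \notin L) (iota 0 k).
  apply/hasPn => /= notL; suff : k <= size L by rewrite size_map -cardE leqNgt dk.
  by rewrite -(size_iota 0 k) uniq_leq_size ?iota_uniq // => a /notL /negPn.
rewrite mem_iota => /andP[_ ak] aL; exists a => // w wS uw.
by apply: contraNneq aL => <-; rewrite map_f // mem_enum inE wS.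
Qed.

Definition acyclic_coloring_on (r k : nat) (S : {set T}) (col : T -> T -> nat) : Prop :=
  [/\ {in S &, forall x y, e x y -> col x y = col y x},
      {in S &, forall x y, e x y -> col x y < k},
      {in S & &, forall x y z, e x y -> e x z -> y != z -> col x y != col x z} &
      (forall c, is_graph_cycle e c -> {subset c <= S} ->
         minn (size c) r <= cycle_colors col c)].

Lemma acyclic_coloring_on0 r k : acyclic_coloring_on r k set0 (fun _ _ => 0).
Proof.
split; try by move=> ? /[!inE].
by move=> [|q c] [] // _ _ _ /(_ q (mem_head _ _)) /[!inE].
Qed.

Lemma acyclic_coloring_onT r k col :
  acyclic_coloring_on r k [set: T] col -> r_acyclic_coloring e r k col.
Proof.
case=> csym clt cprop ccyc; split=> [x y|x y|x y z|c cyc]; rewrite ?inE.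
- exact: csym.
- exact: clt.
- exact: cprop.
by apply: ccyc => // q; rewrite inE.
Qed.

Lemma eq_cycle_colors (col col' : T -> T -> nat) c :
  {in c, forall t, col' t (next c t) = col t (next c t)} ->
  cycle_colors col' c = cycle_colors col c.
Proof. by move=> eqc; rewrite /cycle_colors; congr (size (undup _)); apply/eq_in_map. Qed.

Lemma cycle_subD1 (S : {set T}) c v : is_graph_cycle e c -> {subset c <= S} ->
  deg_in e S v <= 1 -> {subset c <= S :\ v}.
Proof.
move=> cyc cS dv q qc; rewrite in_setD1 cS // andbT.
by apply: contraTneq dv => qv; rewrite -ltnNge -qv (deg_in_cycle cyc cS qc).
Qed.

Lemma acyclic_coloring_on_isolated r k (S : {set T}) v col : deg_in e S v = 0 ->
  acyclic_coloring_on r k (S :\ v) col -> acyclic_coloring_on r k S col.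
Proof.
move=> dv [csym clt cprop ccyc].
have inSv x y : x \in S -> y \in S -> e x y -> x \in S :\ v.
  move=> xS yS xy; rewrite in_setD1 xS andbT; apply/eqP => xv.
  by move: dv; rewrite /deg_in (cardsD1 y) inE yS -xv xy.
have inSv' x y : x \in S -> y \in S -> e x y -> y \in S :\ v.
  by move=> xS yS xy; apply: (inSv y x); rewrite // esym.
split.
- by move=> x y xS yS xy; apply: csym (inSv _ _ xS yS xy) (inSv' _ _ xS yS xy) xy.
- by move=> x y xS yS xy; apply: clt (inSv _ _ xS yS xy) (inSv' _ _ xS yS xy) xy.
- move=> x y z xS yS zS xy xz.
  exact: cprop (inSv _ _ xS yS xy) (inSv' _ _ xS yS xy) (inSv' _ _ xS zS xz) xy xz.
by move=> c cyc cS; apply: ccyc cyc (cycle_subD1 cyc cS (_ : deg_in e S v <= 1)); rewrite dv.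
Qed.

Lemma acyclic_coloring_on_pendant r k (S : {set T}) v col : v \in S -> deg_in e S v = 1 ->
  max_deg e <= k -> acyclic_coloring_on r k (S :\ v) col ->
  exists col', acyclic_coloring_on r k S col'.
Proof.
move=> vS dv Dk [csym clt cprop ccyc].
have [u Nv] : exists u, [set w in S | e v w] = [set u] by apply/cards1P/eqP.
have [uS vu] : u \in S /\ e v u.
  by apply/andP; rewrite -(in_set (fun w => (w \in S) && e v w)) Nv set11.
have Nv_eq w : w \in S -> e v w -> w = u by move=> wS vw; apply/set1P; rewrite -Nv inE wS.
have [a ak aF] : exists2 a, a < k & {in S :\ v, forall w, e u w -> col u w != a}.
  apply/free_color/(leq_trans _ (leq_trans (deg_in_le_max_deg S u) Dk)).
  by apply: deg_in_subset_lt vS _ _; rewrite ?subsetDl ?setD11 // esym.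
have inSv x : x \in S -> x != v -> x \in S :\ v by move=> xS xv; rewrite in_setD1 xv.
pose col' x y := if (x == v) || (y == v) then a else col x y.
exists col'; split.
- move=> x y xS yS xy; rewrite /col' orbC.
  by case: ifP => // /norP[yv xv]; apply: csym (inSv _ xS xv) (inSv _ yS yv) xy.
- move=> x y xS yS xy; rewrite /col'.
  by case: ifP => // /norP[xv yv]; apply: clt (inSv _ xS xv) (inSv _ yS yv) xy.
- move=> x y z xS yS zS xy xz yz; rewrite /col'.
  have [xv|xv] := eqVneq x v.
    by move: yz; rewrite xv in xy xz; rewrite (Nv_eq y yS xy) (Nv_eq z zS xz) eqxx.
  have [yv|yv] := eqVneq y v; have [zv|zv] := eqVneq z v => /=.
  + by rewrite yv zv eqxx in yz.
  + have xu : x = u by apply: Nv_eq; rewrite // esym -yv.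
    by rewrite eq_sym xu; apply: aF (inSv _ zS zv) _; rewrite -xu.
  + have xu : x = u by apply: Nv_eq; rewrite // esym -zv.
    by rewrite xu; apply: aF (inSv _ yS yv) _; rewrite -xu.
  + exact: cprop (inSv _ xS xv) (inSv _ yS yv) (inSv _ zS zv) xy xz yz.
move=> c cyc cS; have cSv := cycle_subD1 cyc cS (eq_leq dv).
rewrite (@eq_cycle_colors col) ?ccyc // => t tc.
have := cSv _ tc; have := cSv (next c t); rewrite mem_next !in_setD1 => /(_ tc).
by case/andP=> /negbTE nv _ /andP[/negbTE tv _]; rewrite /col' nv tv.
Qed.

Section Ear.
Variables (S : {set T}) (x y : T) (s : seq T).
Hypotheses (ear_sub : {subset x :: rcons s y <= S}) (ear_uniq : uniq (x :: rcons s y))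
  (ear_path : path e x (rcons s y)) (ear_deg2 : {in s, forall z, deg_in e S z = 2}).

Local Notation P := (x :: rcons s y).
Local Notation m := (size s).
Local Notation S' := (S :\: [set z in s]).

Lemma size_ear : size P = m.+2.
Proof. by rewrite /= size_rcons. Qed.

Lemma index_ear_nth j : j < m.+2 -> index (nth x P j) P = j.
Proof. by move=> jm; rewrite index_uniq ?size_ear. Qed.

Lemma nth_ear_index z : z \in P -> nth x P (index z P) = z.
Proof. exact: nth_index. Qed.

Lemma nth_ear_last : nth x P m.+1 = y.
Proof. by rewrite /= nth_rcons ltnn eqxx. Qed.

Lemma index_ear_lt z : z \in P -> index z P < m.+2.
Proof. by rewrite -size_ear index_mem. Qed.

Lemma mem_ear_interior z : (z \in s) = (z \in P) && (0 < index z P <= m).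
Proof.
have xs : x \notin s by move: ear_uniq; rewrite /= mem_rcons inE negb_or => /andP[/andP[]].
rewrite /= -cats1 index_cat inE mem_cat; case: (eqVneq x z) => [<-|_].
  by rewrite ltnn andbF (negbTE xs).
case: ifP => zs; rewrite ?orbT ?index_mem //.
by rewrite [_ < m]ltnNge /= leq_addr andbF.
Qed.

Lemma ear_edge j : j <= m -> e (nth x P j) (nth x P j.+1).
Proof. by move=> jm; move/(pathP x): ear_path; apply; rewrite size_rcons ltnS. Qed.

Lemma ear_interior_nbr z w : z \in s -> w \in S -> e z w ->
  w \in P /\ ((index w P).+1 = index z P \/ index w P = (index z P).+1).
Proof.
move=> zs wS zw; move: (zs); rewrite mem_ear_interior => /andP[zP /andP[i0 im]].
have lt_size j : j <= (index z P).+1 -> j < size P.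
  by rewrite size_ear ltnS => /leq_trans; apply.
have i_pred : (index z P).-1 <= (index z P).+1 := leq_trans (leq_pred _) (leqnSn _).
have ez1 : e z (nth x P (index z P).-1).
  by rewrite esym; have := ear_edge (leq_trans (leq_pred _) im); rewrite prednK // nth_ear_index.
have ez2 : e z (nth x P (index z P).+1) by rewrite -{1}(nth_ear_index zP) ear_edge.
have ne : nth x P (index z P).-1 != nth x P (index z P).+1.
  apply/eqP => /(congr1 (index^~ P)); rewrite !index_ear_nth -?size_ear ?lt_size //.
  by move/eqP; rewrite ltn_eqF // ltnS leq_pred.
have PS j : j <= (index z P).+1 -> nth x P j \in S by move=> jz; rewrite ear_sub ?mem_nth ?lt_size.
have [] := deg2_nbr (ear_deg2 zs) (PS _ i_pred) (PS _ (leqnn _)) ez1 ez2 ne wS zw => ->;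
  rewrite mem_nth ?lt_size // index_ear_nth -?size_ear ?lt_size //;
  split=> //; [left; exact: prednK | by right].
Qed.

Lemma ear_end_nbr z u : z \notin s -> z \in S -> u \in s -> e u z ->
  (z = x /\ index u P = 1) \/ (z = y /\ index u P = m).
Proof.
move=> zs zS us uz; have [zP iz] := ear_interior_nbr us zS uz.
move: zs us; rewrite !mem_ear_interior zP andTb => zs /andP[_ iu].
have izm := index_ear_lt zP.
have [z0|zpos] := posnP (index z P).
  by left; split; [rewrite -(nth_ear_index zP) z0 | lia].
have zm : index z P = m.+1 by move: zs; rewrite zpos -ltnNge; lia.
by right; split; [rewrite -(nth_ear_index zP) zm nth_ear_last | lia].
Qed.

Lemma ear_edge_interior j : 0 < m -> j <= m -> (nth x P j \in s) || (nth x P j.+1 \in s).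
Proof.
move=> m0 jm; rewrite !mem_ear_interior !index_ear_nth ?ltnS ?(leq_trans jm) //.
rewrite !mem_nth ?size_ear ?ltnS ?(leq_trans jm) //.
by case: j jm => [|j] jm; rewrite ?m0 ?jm ?orbT.
Qed.

Lemma index_ear_last : index y P = m.+1.
Proof. by rewrite -[y in index y _]nth_ear_last index_ear_nth. Qed.

Lemma mem_ear_rest z : (z \in S') = (z \notin s) && (z \in S).
Proof. by rewrite !inE. Qed.

Section Recolor.
Variables (col : T -> T -> nat) (c : nat -> nat).

Definition ear_recolor (u w : T) : nat :=
  if (u \in s) || (w \in s) then c (minn (index u P) (index w P)) else col u w.

Lemma ear_recolorC u w : (u \in s) || (w \in s) -> ear_recolor u w = ear_recolor w u.
Proof. by rewrite /ear_recolor [(w \in s) || _]orbC minnC => ->. Qed.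

Lemma ear_recolor_edge j : 0 < m -> j <= m -> ear_recolor (nth x P j) (nth x P j.+1) = c j.
Proof.
move=> m0 jm; rewrite /ear_recolor ear_edge_interior // !index_ear_nth ?ltnS ?(leq_trans jm) //.
by rewrite (minn_idPl (leqnSn j)).
Qed.

Hypothesis c_step : forall j, j < m -> c j != c j.+1.

Lemma ear_recolor_interior_proper z u w : z \in s -> u \in S -> w \in S ->
  e z u -> e z w -> u != w -> ear_recolor z u != ear_recolor z w.
Proof.
move=> zs uS wS zu zw uw; rewrite /ear_recolor zs.
have [uP iu] := ear_interior_nbr zs uS zu; have [wP iw] := ear_interior_nbr zs wS zw.
have iz : 0 < index z P <= m by move: zs; rewrite mem_ear_interior => /andP[].
apply: minn_step_neq c_step iz iu iw _.
by apply: contra_neq uw => E; rewrite -(nth_ear_index uP) E nth_ear_index.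
Qed.

Hypotheses (x_free : {in S', forall w, e x w -> col x w != c 0})
  (y_free : {in S', forall w, e y w -> col y w != c m}).

Lemma ear_recolor_end_proper z u w : z \notin s -> z \in S -> u \in s -> w \in S ->
  e z u -> e z w -> u != w -> ear_recolor z u != ear_recolor z w.
Proof.
move=> zs zS us wS zu zw uw.
have xy : x != y by move: ear_uniq; rewrite /= mem_rcons inE negb_or => /andP[/andP[]].
have sP v : v \in s -> v \in P by rewrite mem_ear_interior => /andP[].
have uw_idx : w \in s -> index u P != index w P.
  move=> ws; apply: contra_neq uw => E.
  by rewrite -(nth_ear_index (sP _ us)) E nth_ear_index ?sP.
have end_idx v : v \in s -> e z v -> (z = x /\ index v P = 1) \/ (z = y /\ index v P = m).
  by move=> vs zv; apply: ear_end_nbr; rewrite // esym.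
have rest_col : w \notin s -> ear_recolor z w = col z w.
  by rewrite /ear_recolor (negbTE zs) => /negbTE->.
rewrite {1}/ear_recolor us orbT.
case: (end_idx u us zu) => [[zx iu]|[zy iu]]; subst z.
- rewrite iu /= eqxx; case: (boolP (w \in s)) => ws.
    case: (end_idx w ws zw) => [[_ iw]|[yx _]]; last by rewrite yx eqxx in xy.
    by move: (uw_idx ws); rewrite iu iw eqxx.
  by rewrite rest_col // eq_sym x_free // mem_ear_rest ws wS.
rewrite iu index_ear_last (minn_idPr (leqnSn m)); case: (boolP (w \in s)) => ws.
  case: (end_idx w ws zw) => [[yx _]|[_ iw]]; first by rewrite yx eqxx in xy.
  by move: (uw_idx ws); rewrite iu iw eqxx.
by rewrite rest_col // eq_sym y_free // mem_ear_rest ws wS.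
Qed.

Lemma ear_recolor_proper :
  {in S' & &, forall z u w, e z u -> e z w -> u != w -> col z u != col z w} ->
  {in S & &, forall z u w, e z u -> e z w -> u != w -> ear_recolor z u != ear_recolor z w}.
Proof.
move=> cprop z u w zS uS wS zu zw uw.
have [zs|zs] := boolP (z \in s); first exact: ear_recolor_interior_proper zs uS wS zu zw uw.
have [us|us] := boolP (u \in s); first exact: ear_recolor_end_proper zs zS us wS zu zw uw.
have [ws|ws] := boolP (w \in s).
  by rewrite eq_sym (ear_recolor_end_proper zs zS ws uS zw zu) // eq_sym.
rewrite /ear_recolor (negbTE zs) (negbTE us) (negbTE ws).
by apply: cprop; rewrite // mem_ear_rest ?zs ?us ?ws.
Qed.

Lemma ear_recolor_cycle c' : 0 < m -> is_graph_cycle e c' -> {subset c' <= S} ->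
  has (mem c') s -> size (undup [seq c j | j <- iota 0 m.+1]) <= cycle_colors ear_recolor c'.
Proof.
move=> m0 cyc cS s_c'.
have sS : {subset s <= S} by move=> z zs; apply: ear_sub; rewrite inE mem_rcons inE zs !orbT.
have sc := ear_sub_cycle ear_path ear_deg2 sS cyc cS s_c'.
have inL u w : u \in s -> w \in S -> e u w ->
    ear_recolor u w \in [seq ear_recolor t (next c' t) | t <- c'].
  move=> us wS uw; case: (deg2_cycle_edge cyc cS (sc u us) (ear_deg2 us) wS uw) => [->|[wc uE]].
    by apply/mapP; exists u; rewrite ?sc.
  by rewrite ear_recolorC ?us // uE; apply/mapP; exists w.
apply: size_undup_subset => t /mapP[j]; rewrite mem_iota ltnS => /andP[_ jm] ->.
have PS i : i <= m.+1 -> nth x P i \in S by move=> im; rewrite ear_sub ?mem_nth ?size_ear.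
rewrite -ear_recolor_edge //; case/orP: (ear_edge_interior m0 jm) => [js|j1s].
  exact: inL js (PS j.+1 jm) (ear_edge jm).
rewrite ear_recolorC ?j1s ?orbT //.
by apply: inL j1s (PS j (leqW jm)) _; rewrite esym ear_edge.
Qed.

End Recolor.

Lemma acyclic_coloring_on_ear r k col : 3 <= r -> r <= k -> r <= m -> max_deg e <= k ->
  acyclic_coloring_on r k S' col -> exists col', acyclic_coloring_on r k S col'.
Proof.
move=> r3 rk rm Dk [csym clt cprop ccyc].
have m0 : 0 < m by apply: leq_trans rm; apply: leq_trans r3.
have PS i : i <= m.+1 -> nth x P i \in S by move=> im; rewrite ear_sub ?mem_nth ?size_ear.
have Ps i : 0 < i <= m -> nth x P i \in s.
  move=> /andP[i0 im].
  by rewrite mem_ear_interior mem_nth ?index_ear_nth ?size_ear ?i0 ?ltnS ?leqW.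
have end_free z i : z \in S -> 0 < i <= m -> e z (nth x P i) ->
    exists2 a, a < k & {in S', forall w, e z w -> col z w != a}.
  move=> zS im zi; apply/free_color/(leq_trans _ (leq_trans (deg_in_le_max_deg S z) Dk)).
  apply: deg_in_subset_lt zi; rewrite ?subsetDl ?PS ?mem_ear_rest ?Ps //.
  by case/andP: im => _ /leqW.
have [a ak x_free] := end_free x 1 (PS 0 isT) m0 (ear_edge (leq0n m)).
have yS : y \in S by rewrite -nth_ear_last PS.
have ey : e y (nth x P m) by have := ear_edge (leqnn m); rewrite nth_ear_last esym.
have mm : 0 < m <= m by rewrite m0 leqnn.
have [b bk y_free] := end_free y m yS mm ey.
have [c [c0 cm c_step c_lt c_many]] := ear_coloring r3 rk rm ak bk.
exists (ear_recolor col c); split.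
- move=> u w uS wS uw; have [/ear_recolorC //|] := boolP ((u \in s) || (w \in s)).
  rewrite /ear_recolor [(w \in s) || _]orbC => /negPf uws; rewrite uws.
  by move/norP: uws => [us ws]; apply: csym; rewrite // mem_ear_rest ?us ?ws.
- move=> u w uS wS uw; rewrite /ear_recolor; case: ifP => // /norP[us ws].
  by apply: clt; rewrite // mem_ear_rest ?us ?ws.
- by apply: ear_recolor_proper => //; rewrite ?c0 ?cm.
move=> c' cyc cS; have [s_c'|] := boolP (has (mem c') s).
  apply: leq_trans (geq_minr _ _) (leq_trans c_many _).
  exact: (ear_recolor_cycle col c m0 cyc cS s_c').
move/hasPn => c'_s; have c'S' : {subset c' <= S'}.
  by move=> q qc; rewrite mem_ear_rest cS // andbT; apply: contraL qc => /c'_s.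
rewrite (@eq_cycle_colors col) ?ccyc // => t tc.
have := c'S' _ tc; have := c'S' (next c' t); rewrite mem_next tc mem_ear_rest.
case/(_ isT)/andP => /negbTE nt _ /[!mem_ear_rest] /andP[/negbTE ts _].
by rewrite /ear_recolor ts nt.
Qed.

End Ear.

Lemma p_reduction_cycle p (S S' : {set T}) c : p_reduction e p S S' ->
  is_graph_cycle e c -> {subset c <= S} -> {subset c <= S'} \/ p <= (size c).+1.
Proof.
case=> [[v [_ [dv ->]]]|[[v [_ [dv ->]]]|
         [x [y [s [earS [ear_uniq [ear_path [_ [s2 [ps ->]]]]]]]]]]] cyc cS.
- by left; apply: cycle_subD1 cyc cS _; rewrite dv.
- by left; apply: cycle_subD1 cyc cS _; rewrite dv.
have [s_c|/hasPn c_s] := boolP (has (mem c) s); [right|left].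
  have sS : {subset s <= S} by move=> z zs; apply: (allP earS); rewrite inE mem_rcons inE zs !orbT.
  have s2' : {in s, forall z, deg_in e S z = 2} by move=> z /(allP s2) /eqP.
  have us : uniq s by move: ear_uniq; rewrite /= rcons_uniq => /andP[_ /andP[]].
  apply: leq_trans ps _; rewrite ltnS uniq_leq_size //.
  exact: ear_sub_cycle ear_path s2' sS cyc cS s_c.
by move=> q qc; rewrite !inE cS // andbT; apply: contraL qc => /c_s.
Qed.

Lemma p_degenerate_long_cycle p (S : {set T}) c : p_degenerate e p S ->
  is_graph_cycle e c -> {subset c <= S} -> exists2 c', is_graph_cycle e c' & p <= (size c').+1.
Proof.
move=> pS; elim: pS c => [|{}S S' red _ IH] c cyc cS.
  by case: cyc; case: c cS => // q c /(_ q (mem_head _ _)); rewrite inE.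
by case: (p_reduction_cycle red cyc cS) => [/(IH c cyc)//|]; exists c.
Qed.

Lemma p_degenerate_coloring p r k (S : {set T}) : 3 <= r -> r <= k -> r < p ->
  max_deg e <= k -> p_degenerate e p S -> exists col, acyclic_coloring_on r k S col.
Proof.
move=> r3 rk rp Dk; elim=> [|{}S S' red _ [col IH]].
  by exists (fun _ _ => 0); exact: acyclic_coloring_on0.
case: red IH => [[v [_ [dv ->]]]|[[v [vS [dv ->]]]|
                 [x [y [s [earS [ear_uniq [ear_path [_ [s2 [ps ->]]]]]]]]]]] IH.
- by exists col; apply: acyclic_coloring_on_isolated IH.
- exact: acyclic_coloring_on_pendant vS dv Dk IH.
have earS' : {subset x :: rcons s y <= S} by apply/allP.
have s2' : {in s, forall z, deg_in e S z = 2} by move=> z /(allP s2) /eqP.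
apply: (acyclic_coloring_on_ear earS' ear_uniq ear_path s2' r3 rk _ Dk IH).
by rewrite -ltnS (leq_trans rp ps).
Qed.

Lemma max_deg_le_colors r k col : r_acyclic_coloring e r k col -> max_deg e <= k.
Proof.
case=> _ c_lt c_proper _; apply/bigmax_leqP => v _.
rewrite cardE -(size_map (col v)) -[k](size_iota 0); apply: uniq_leq_size.
  rewrite map_inj_in_uniq ?enum_uniq // => u w; rewrite !mem_enum !inE => vu vw.
  by apply: contra_eq; apply: c_proper.
by move=> t /mapP[u]; rewrite mem_enum inE => vu ->; rewrite mem_iota add0n c_lt.
Qed.

Lemma long_cycle_le_colors r k col c : r_acyclic_coloring e r k col ->
  is_graph_cycle e c -> r <= size c -> r <= k.
Proof.
case=> _ c_lt _ c_cycle cyc rc; have := c_cycle c cyc; rewrite (minn_idPr rc) => /leq_trans; apply.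
rewrite -[k](size_iota 0); apply: uniq_leq_size; first exact: undup_uniq.
move=> t; rewrite mem_undup => /mapP[u uc ->].
by case: cyc => _ _ cc; rewrite mem_iota add0n c_lt // next_cycle.
Qed.

End Graph.

Theorem mainTheorem14 (T : finType) (e : rel T) (r : nat) :
  symmetric e -> irreflexive e -> 3 <= r ->
  path_degenerate e r.+1 -> 3 <= max_deg e ->
  (is_forest e -> gen_acyclic_index e r (max_deg e)) /\
  (~ is_forest e -> gen_acyclic_index e r (maxn (max_deg e) r)).
Proof.
move=> esym _ r3 pdeg D3.
have colorable R K : 3 <= R -> R <= K -> R <= r -> max_deg e <= K ->
    exists col, r_acyclic_coloring e R K col.
  move=> R3 RK Rr DK; have [col colS] := p_degenerate_coloring esym R3 RK (Rr : R < r.+1) DK pdeg.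
  by exists col; apply: acyclic_coloring_onT.
split=> [forest|cyclic]; split.
- have [col [c_sym c_lt c_proper _]] := colorable 3 _ (leqnn 3) D3 r3 (leqnn _).
  by exists col; split=> // c /forest.
- by move=> k [col /max_deg_le_colors].
- exact: colorable r _ r3 (leq_maxr _ _) (leqnn r) (leq_maxl _ _).
move=> k [col col_k]; rewrite geq_max (max_deg_le_colors col_k) /=.
case: leqP => // kr; exfalso; apply: cyclic => c cyc.
have [c' cyc' rc'] := p_degenerate_long_cycle esym pdeg cyc (fun q _ => in_setT q).
by have := long_cycle_le_colors col_k cyc' rc'; rewrite leqNgt kr.
Qed.
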